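(* Under the standing setup below, as $n \to +\infty$, \[ a_{-n} u_n + a_{-n+1} u_{n+1} = \frac{\pi}{4} + O\!\left( \frac{1}{D_{n-1}^2} \right). \] In particular, $\lim_{n \to +\infty} \left( a_{-n} u_n + a_{-n+1} u_{n+1} \right) = \dfrac{\pi}{4}$.
   Context: Standing setup: $a_0, a_1 \in \mathbb{Z}$ and $u_0 > u_1 > 0$ are rational numbers with $a_0 \arctan u_0 + a_1 \arctan u_1 = \pi/4$. Let $\alpha := \arctan u_0 / \arctan u_1$ (which is $>1$ and irrational), with infinite simple continued fraction expansion $\alpha = [q_0; q_1, q_2, \dots]$, $q_i \in \mathbb{N}$. The numbers $u_n$ ($n \in \mathbb{N}_0$) are the positive reals with the given $u_0,u_1$ and $\arctan u_n = q_n \arctan u_{n+1} + \arctan u_{n+2}$ for all $n \in \mathbb{N}_0$. The integers $a_{-n}$ for $n \geq 1$ are defined recursively by $a_{-n-1} := q_n a_{-n} + a_{-n+1}$ for all $n \in \mathbb{N}_0$. The sequences $N_k, D_k$ ($k \ge -2$) are defined by $N_{-2}=0$, $N_{-1}=1$, $D_{-2}=1$, $D_{-1}=0$, and $N_k = q_k N_{k-1} + N_{k-2}$, $D_k = q_k D_{k-1} + D_{k-2}$ for $k \in \mathbb{N}_0$; thus $N_n/D_n = [q_0; q_1, \dots, q_n]$ in lowest terms for $n \ge 0$. *)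

From Stdlib Require Import Reals ZArith.
Open Scope R_scope.

Definition is_rational (x : R) : Prop :=
  exists p q : Z, (q <> 0)%Z /\ x = IZR p / IZR q.

(** Complete quotients of the simple continued fraction algorithm:
    x_0 = x, x_{k+1} = 1 / (x_k - floor x_k).  (Int_part = floor.) *)
Fixpoint cf_rem (x : R) (k : nat) : R :=
  match k with
  | O => x
  | S k => / (cf_rem x k - IZR (Int_part (cf_rem x k)))
  end.

(** Partial quotients: x = [q_0; q_1, q_2, ...] with q_k = floor x_k. *)
Definition cf_digit (x : R) (k : nat) : Z := Int_part (cf_rem x k).

(** cf_den_aux q k = (D_k, D_{k-1}) where D_{-2}=1, D_{-1}=0,
    D_k = q_k D_{k-1} + D_{k-2}. *)
Fixpoint cf_den_aux (q : nat -> Z) (k : nat) : Z * Z :=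
  match k with
  | O => (1%Z, 0%Z)
  | S k => let (d, d') := cf_den_aux q k in (q (S k) * d + d', d)%Z
  end.

Definition cf_den (q : nat -> Z) (k : nat) : Z := fst (cf_den_aux q k).

From Stdlib Require Import Reals ZArith Lra Lia Psatz.
Open Scope R_scope.

(* Put θ_n = atan u_n.  The recursion for u_n says that θ_0 / θ_1 has the
   complete quotients θ_n / θ_{n+1}, so the θ_n decrease and the q_n are its
   partial quotients.  Both a_{1-k} and D_{k-2} satisfy
   x_{k+2} = q_k x_{k+1} + x_k, which makes a_{-n} θ_n + a_{-n+1} θ_{n+1} = π/4
   and D_{n-1} θ_n + D_{n-2} θ_{n+1} = θ_1 independent of n.  The second
   identity gives θ_n <= θ_1 / D_{n-1}, and the recursions give
   |a_{-n}| = O(D_{n-1}).  Since u - atan u = O(u^3), replacing θ_n by u_n costs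
   O(D_{n-1} θ_n^3) = O(1 / D_{n-1}^2), and D_{n-1} grows at least linearly. *)

Lemma atan_eq_div x : 0 < x -> exists c, 0 < c < x /\ atan x = x / (1 + c ^ 2).
Proof.
  intros Hx.
  destruct (MVT_cor2 atan (fun c => / (1 + c ^ 2)) 0 x Hx) as [c [Hc Hcx]].
  { intros c _; apply derivable_pt_lim_atan. }
  exists c; split; [exact Hcx|].
  rewrite atan_0 in Hc; unfold Rdiv; lra.
Qed.

Lemma sub_atan_bound x b :
  0 < x <= b -> 0 <= x - atan x <= ((1 + b ^ 2) * atan x) ^ 3.
Proof.
  intros Hx.
  destruct (atan_eq_div x (proj1 Hx)) as [c [Hc ->]].
  set (t := 1 + c ^ 2).
  assert (Ht : 1 <= t) by (unfold t; nra).
  assert (Hc2 : c ^ 2 <= x ^ 2) by nra.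
  assert (Htb : t <= 1 + b ^ 2) by (unfold t; nra).
  assert (Hcube : x - x / t <= x ^ 3).
  { apply (Rmult_le_reg_r t); [lra|].
    replace ((x - x / t) * t) with (x * c ^ 2) by (field_simplify; [unfold t; ring | lra]).
    assert (0 <= x ^ 3 * c ^ 2) by (apply Rmult_le_pos; apply pow_le; lra).
    unfold t; nra. }
  assert (Hlin : x <= (1 + b ^ 2) * (x / t)).
  { apply (Rmult_le_reg_r t); [lra|].
    replace ((1 + b ^ 2) * (x / t) * t) with ((1 + b ^ 2) * x) by (field; lra).
    nra. }
  assert (Hdiv : x / t <= x).
  { apply (Rmult_le_reg_r t); [lra|]. replace (x / t * t) with x by (field; lra). nra. }
  split; [lra|].
  apply (Rle_trans _ _ _ Hcube), pow_incr; lra.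
Qed.

Definition cf_recurrent (q B : nat -> Z) : Prop :=
  forall n, B (S (S n)) = (q n * B (S n) + B n)%Z.

Lemma cf_recurrent_invariant q B (x : nat -> R) :
  cf_recurrent q B -> (forall n, x n = IZR (q n) * x (S n) + x (S (S n))) ->
  forall n, IZR (B (S n)) * x n + IZR (B n) * x (S n)
            = IZR (B 1%nat) * x 0%nat + IZR (B 0%nat) * x 1%nat.
Proof.
  intros HB Hx n; induction n as [|n IH]; [reflexivity|].
  rewrite HB, plus_IZR, mult_IZR, <- IH, (Hx n); ring.
Qed.

Lemma cf_recurrent_dominated q A B K :
  (forall n, 0 <= q n)%Z -> cf_recurrent q A -> cf_recurrent q B ->
  (Z.abs (A 0%nat) <= K * B 0%nat)%Z -> (Z.abs (A 1%nat) <= K * B 1%nat)%Z ->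
  forall n, (Z.abs (A n) <= K * B n)%Z.
Proof.
  intros Hq HA HB H0 H1.
  enough (H : forall n, (Z.abs (A n) <= K * B n /\ Z.abs (A (S n)) <= K * B (S n))%Z)
    by (intro n; apply H).
  induction n as [|n [IHn IHSn]]; [lia|].
  split; [exact IHSn|].
  rewrite HA, HB.
  pose proof (Z.abs_triangle (q n * A (S n)) (A n)) as Htri.
  rewrite Z.abs_mul, (Z.abs_eq (q n)) in Htri by apply Hq.
  specialize (Hq n); nia.
Qed.

(* [cf_den2 q k] is D_{k-2}, counted from D_{-2} = 1 and D_{-1} = 0. *)
Fixpoint cf_den2 (q : nat -> Z) (k : nat) : Z :=
  match k with
  | O => 1%Z
  | S O => 0%Z
  | S ((S j) as k') => (q j * cf_den2 q k' + cf_den2 q j)%Z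
  end.

Lemma cf_den2_recurrent q : cf_recurrent q (cf_den2 q).
Proof. now intros [|n]. Qed.

Lemma cf_den_aux_cf_den2 q m : cf_den_aux q m = (cf_den2 q (S (S m)), cf_den2 q (S m)).
Proof.
  induction m as [|m IH]; cbn [cf_den_aux]; [f_equal; simpl; lia|].
  now rewrite IH.
Qed.

Lemma cf_den_cf_den2 q m : cf_den q m = cf_den2 q (S (S m)).
Proof. unfold cf_den; now rewrite cf_den_aux_cf_den2. Qed.

Section ContinuantGrowth.

Variable q : nat -> Z.
Hypothesis q_ge1 : forall n, (1 <= q n)%Z.

Lemma cf_den2_nonneg n : (0 <= cf_den2 q n)%Z.
Proof.
  enough (H : forall n, (0 <= cf_den2 q n /\ 0 <= cf_den2 q (S n))%Z) by apply H.
  induction n0 as [|n0 [IHn IHSn]]; [simpl; lia|].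
  split; [exact IHSn|].
  rewrite cf_den2_recurrent; specialize (q_ge1 n0); nia.
Qed.

Lemma cf_den2_le_succ n : (cf_den2 q (S n) <= cf_den2 q (S (S n)))%Z.
Proof.
  rewrite cf_den2_recurrent.
  pose proof (cf_den2_nonneg n); pose proof (cf_den2_nonneg (S n)).
  specialize (q_ge1 n); nia.
Qed.

Lemma cf_den2_pos n : (1 <= cf_den2 q (S (S n)))%Z.
Proof.
  induction n as [|n IH].
  - rewrite cf_den2_recurrent; simpl; lia.
  - pose proof (cf_den2_le_succ (S n)); lia.
Qed.

Lemma cf_den2_linear n : (Z.of_nat n <= 2 * cf_den2 q (S n))%Z.
Proof.
  enough (H : forall n, (Z.of_nat n <= 2 * cf_den2 q (S n))%Z /\
                        (Z.of_nat (S n) <= 2 * cf_den2 q (S (S n)))%Z) by apply H.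
  induction n0 as [|n0 [IHn IHSn]].
  - pose proof (cf_den2_pos 0); simpl Z.of_nat; cbn [cf_den2]; lia.
  - split; [exact IHSn|].
    rewrite cf_den2_recurrent.
    pose proof (cf_den2_pos n0); pose proof (cf_den2_nonneg (S (S n0))).
    specialize (q_ge1 (S n0)); rewrite !Nat2Z.inj_succ in *; nia.
Qed.

End ContinuantGrowth.

Section RatioExpansion.

Variable th : nat -> R.
Hypothesis th_pos : forall n, 0 < th n.
Hypothesis th_1_lt_0 : th 1%nat < th 0%nat.
Hypothesis th_rec : forall n,
  th n = IZR (cf_digit (th 0%nat / th 1%nat) n) * th (S n) + th (S (S n)).

Lemma cf_rem_ratio n : cf_rem (th 0%nat / th 1%nat) n = th n / th (S n).
Proof.
  induction n as [|n IH]; [reflexivity|].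
  cbn [cf_rem]; rewrite IH.
  pose proof (th_rec n) as Hrec; unfold cf_digit in Hrec; rewrite IH in Hrec.
  set (z := IZR (Int_part (th n / th (S n)))) in *.
  pose proof (th_pos (S n)); pose proof (th_pos (S (S n))).
  replace (th n / th (S n) - z) with (th (S (S n)) / th (S n)).
  - field; lra.
  - rewrite Hrec; field; lra.
Qed.

Lemma ratio_seq_decreasing n : th (S n) < th n.
Proof.
  destruct n as [|n]; [exact th_1_lt_0|].
  pose proof (base_Int_part (cf_rem (th 0%nat / th 1%nat) n)) as [_ Hfloor].
  rewrite cf_rem_ratio in Hfloor.
  pose proof (th_rec n) as Hrec; unfold cf_digit in Hrec; rewrite cf_rem_ratio in Hrec.
  set (z := IZR (Int_part (th n / th (S n)))) in *.
  pose proof (th_pos (S n)).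
  assert (Hn : th n = th n / th (S n) * th (S n)) by (field; lra).
  nra.
Qed.

Lemma cf_digit_ratio_ge1 n : (1 <= cf_digit (th 0%nat / th 1%nat) n)%Z.
Proof.
  pose proof (base_Int_part (cf_rem (th 0%nat / th 1%nat) n)) as [_ Hfloor].
  fold (cf_digit (th 0%nat / th 1%nat) n) in Hfloor; rewrite cf_rem_ratio in Hfloor.
  pose proof (ratio_seq_decreasing n); pose proof (th_pos (S n)).
  assert (Hratio : 1 < th n / th (S n)).
  { apply (Rmult_lt_reg_r (th (S n))); [lra|].
    replace (th n / th (S n) * th (S n)) with (th n) by (field; lra); lra. }
  assert (Hq : 0 < IZR (cf_digit (th 0%nat / th 1%nat) n)) by lra.
  apply lt_IZR in Hq; lia.
Qed.

End RatioExpansion.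

Lemma cv_infty_of_linear_lower (v : nat -> R) (c : R) :
  0 < c -> (forall n, INR n <= c * v n) -> cv_infty v.
Proof.
  intros Hc Hv M.
  destruct (INR_archimed 1 (c * M) Rlt_0_1) as [N HN].
  exists N; intros n Hn.
  apply le_INR in Hn; specialize (Hv n).
  apply (Rmult_lt_reg_l c); lra.
Qed.

Lemma Un_cv_of_dist_le_div_sqr (x e : nat -> R) (l : R) :
  cv_infty e ->
  (exists C N, forall n, (N <= n)%nat -> Rabs (x n - l) <= C / e n ^ 2) ->
  Un_cv x l.
Proof.
  intros He [C [N HC]] eps Heps.
  destruct (He (Rabs C / eps + 1)) as [N' HN'].
  exists (max N N'); intros n Hn; unfold R_dist.
  assert (HCeps : 0 <= Rabs C / eps).
  { apply Rmult_le_pos; [apply Rabs_pos | apply Rlt_le, Rinv_0_lt_compat; lra]. }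
  assert (Hen : Rabs C / eps + 1 < e n) by (apply HN'; lia).
  assert (HCe : Rabs C < eps * e n).
  { replace (Rabs C) with (eps * (Rabs C / eps)) by (field; lra).
    apply Rmult_lt_compat_l; lra. }
  apply (Rle_lt_trans _ (C / e n ^ 2)); [apply HC; lia|].
  assert (HC2 : C < eps * e n ^ 2).
  { assert (eps * e n <= eps * e n ^ 2) by (apply Rmult_le_compat_l; nra).
    pose proof (Rle_abs C); lra. }
  apply (Rmult_lt_reg_r (e n ^ 2)); [nra|].
  replace (C / e n ^ 2 * e n ^ 2) with C by (field; lra); lra.
Qed.

Lemma Rabs_comb_le_div_sqr a b x y K c d :
  0 < d -> Rabs a <= K * d -> Rabs b <= K * d -> 0 <= x -> 0 <= y ->
  d ^ 3 * x <= c -> d ^ 3 * y <= c -> Rabs (a * x + b * y) <= 2 * K * c / d ^ 2.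
Proof.
  intros Hd Ha Hb Hx Hy Hxc Hyc.
  assert (Hd2 : 0 < d ^ 2) by nra.
  assert (Hax : Rabs a * x <= K * d * x) by (apply Rmult_le_compat_r; lra).
  assert (Hby : Rabs b * y <= K * d * y) by (apply Rmult_le_compat_r; lra).
  assert (HK : 0 <= K) by (pose proof (Rabs_pos a); nra).
  assert (Hsum : d ^ 2 * (K * d * x + K * d * y) <= 2 * K * c).
  { replace (d ^ 2 * (K * d * x + K * d * y)) with (K * (d ^ 3 * x + d ^ 3 * y)) by ring.
    apply (Rle_trans _ (K * (2 * c))); [apply Rmult_le_compat_l|]; lra. }
  apply (Rle_trans _ (Rabs a * x + Rabs b * y)).
  - rewrite <- (Rabs_pos_eq x), <- (Rabs_pos_eq y) at 2 by lra.
    rewrite <- !Rabs_mult; apply Rabs_triang.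
  - apply (Rmult_le_reg_l (d ^ 2)); [lra|].
    replace (d ^ 2 * (2 * K * c / d ^ 2)) with (2 * K * c) by (field; lra).
    nra.
Qed.

Section ArctanRelation.

Variables (u : nat -> R) (A : nat -> Z).
Hypothesis u_pos : forall n, 0 < u n.
Hypothesis u1_lt_u0 : u 1%nat < u 0%nat.

Local Notation q := (cf_digit (atan (u 0%nat) / atan (u 1%nat))).
Local Notation D := (cf_den2 q).

Hypothesis atan_u_rec : forall n, atan (u n) = IZR (q n) * atan (u (S n)) + atan (u (S (S n))).
Hypothesis A_rec : cf_recurrent q A.

Lemma atan_u_pos n : 0 < atan (u n).
Proof. rewrite <- atan_0; apply atan_increasing, u_pos. Qed.

Lemma atan_u1_lt_u0 : atan (u 1%nat) < atan (u 0%nat).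
Proof. now apply atan_increasing. Qed.

Lemma cf_digit_u_ge1 n : (1 <= q n)%Z.
Proof.
  exact (cf_digit_ratio_ge1 (fun n => atan (u n)) atan_u_pos atan_u1_lt_u0 atan_u_rec n).
Qed.

Lemma atan_u_le_u0 n : atan (u n) <= atan (u 0%nat).
Proof.
  induction n as [|n IH]; [lra|].
  pose proof (ratio_seq_decreasing (fun n => atan (u n)) atan_u_pos atan_u1_lt_u0 atan_u_rec n).
  simpl in *; lra.
Qed.

Lemma u_le_u0 n : u n <= u 0%nat.
Proof.
  destruct (Rle_or_lt (u n) (u 0%nat)) as [Hle | Hlt]; [exact Hle|].
  apply atan_increasing in Hlt; pose proof (atan_u_le_u0 n); lra.
Qed.

Lemma den_atan_u_le n : IZR (D (S n)) * atan (u n) <= atan (u 1%nat).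
Proof.
  pose proof (cf_recurrent_invariant _ _ (fun n => atan (u n))
                (cf_den2_recurrent q) atan_u_rec n) as Hinv.
  change (D 1%nat) with 0%Z in Hinv; change (D 0%nat) with 1%Z in Hinv.
  pose proof (cf_den2_nonneg q cf_digit_u_ge1 n) as HD; apply IZR_le in HD.
  pose proof (atan_u_pos (S n)); nra.
Qed.

Lemma sub_atan_u_bound n :
  0 <= u n - atan (u n) /\
  IZR (D (S n)) ^ 3 * (u n - atan (u n)) <= ((1 + u 0%nat ^ 2) * atan (u 1%nat)) ^ 3.
Proof.
  destruct (sub_atan_bound (u n) (u 0%nat)) as [Herr0 Herr]; [split; [apply u_pos | apply u_le_u0]|].
  split; [exact Herr0|].
  pose proof (den_atan_u_le n); pose proof (atan_u_pos n).
  set (M := 1 + u 0%nat ^ 2) in *; set (d := IZR (D (S n))) in *.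
  assert (Hd : 0 <= d) by (apply IZR_le, cf_den2_nonneg, cf_digit_u_ge1).
  assert (HM : 0 <= M) by (unfold M; nra).
  apply (Rle_trans _ (d ^ 3 * (M * atan (u n)) ^ 3)).
  - apply Rmult_le_compat_l; [apply pow_le|]; lra.
  - rewrite <- Rpow_mult_distr; apply pow_incr.
    split.
    + apply Rmult_le_pos; [lra | apply Rmult_le_pos; lra].
    + replace (d * (M * atan (u n))) with (M * (d * atan (u n))) by ring.
      apply Rmult_le_compat_l; lra.
Qed.

Lemma A_le_den n :
  (Z.abs (A (S (S n))) <= (Z.abs (A 2%nat) + Z.abs (A 1%nat)) * D (S (S n)))%Z.
Proof.
  apply (cf_recurrent_dominated (fun n => q (S (S n))) (fun n => A (S (S n)))
           (fun n => D (S (S n)))).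
  - intro k; pose proof (cf_digit_u_ge1 (S (S k))); lia.
  - intro k; apply A_rec.
  - intro k; apply cf_den2_recurrent.
  - cbn [cf_den2]; lia.
  - rewrite A_rec, (cf_den2_recurrent q 1%nat); cbn [cf_den2].
    pose proof (cf_digit_u_ge1 1%nat).
    pose proof (Z.abs_triangle (q 1%nat * A 2%nat) (A 1%nat)) as Htri.
    rewrite Z.abs_mul, (Z.abs_eq (q 1%nat)) in Htri by lia; nia.
Qed.

Lemma arctan_relation_error :
  exists C, forall n, (2 <= n)%nat ->
    Rabs (IZR (A (S n)) * u n + IZR (A n) * u (S n)
          - (IZR (A 1%nat) * atan (u 0%nat) + IZR (A 0%nat) * atan (u 1%nat)))
      <= C / IZR (D (S n)) ^ 2.
Proof.
  set (K := (Z.abs (A 2%nat) + Z.abs (A 1%nat))%Z).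
  exists (2 * IZR K * ((1 + u 0%nat ^ 2) * atan (u 1%nat)) ^ 3).
  intros n Hn; destruct n as [|[|m]]; [lia | lia|].
  rewrite <- (cf_recurrent_invariant _ _ (fun n => atan (u n)) A_rec atan_u_rec (S (S m))).
  pose proof (cf_den2_le_succ q cf_digit_u_ge1 (S (S m))) as HD_next.
  pose proof (cf_den2_le_succ q cf_digit_u_ge1 (S m)) as HD_prev.
  pose proof (cf_den2_pos q cf_digit_u_ge1 (S m)) as Hpos.
  pose proof (A_le_den m) as HAm; pose proof (A_le_den (S m)) as HASm; fold K in HAm, HASm.
  destruct (sub_atan_u_bound (S (S m))) as [Hx0 Hx].
  destruct (sub_atan_u_bound (S (S (S m)))) as [Hy0 Hy].
  apply IZR_le in HD_next, Hpos.
  replace (IZR (A (S (S (S m)))) * u (S (S m)) + IZR (A (S (S m))) * u (S (S (S m)))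
           - (IZR (A (S (S (S m)))) * atan (u (S (S m)))
              + IZR (A (S (S m))) * atan (u (S (S (S m))))))
    with (IZR (A (S (S (S m)))) * (u (S (S m)) - atan (u (S (S m))))
          + IZR (A (S (S m))) * (u (S (S (S m))) - atan (u (S (S (S m)))))) by ring.
  apply Rabs_comb_le_div_sqr; try assumption; try lra.
  - rewrite <- abs_IZR, <- mult_IZR; apply IZR_le; exact HASm.
  - rewrite <- abs_IZR, <- mult_IZR; apply IZR_le.
    apply (Z.le_trans _ _ _ HAm), Z.mul_le_mono_nonneg_l; [lia | exact HD_prev].
  - apply (Rle_trans _ (IZR (D (S (S (S (S m))))) ^ 3 * (u (S (S (S m))) - atan (u (S (S (S m))))))); [|exact Hy].
    apply Rmult_le_compat_r, pow_incr; lra.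
Qed.

End ArctanRelation.

Theorem corollary3 (a0 a1 : Z) (u0 u1 : R) (u : nat -> R) (A : nat -> Z) :
  is_rational u0 -> is_rational u1 -> 0 < u1 -> u1 < u0 ->
  IZR a0 * atan u0 + IZR a1 * atan u1 = PI / 4 ->
  ~ is_rational (atan u0 / atan u1) ->
  u 0%nat = u0 -> u 1%nat = u1 -> (forall n, 0 < u n) ->
  (forall n, atan (u n) =
     IZR (cf_digit (atan u0 / atan u1) n) * atan (u (S n)) + atan (u (S (S n)))) ->
  A 0%nat = a1 -> A 1%nat = a0 ->
  (forall n, A (S (S n)) = (cf_digit (atan u0 / atan u1) n * A (S n) + A n)%Z) ->
  (exists C : R, exists N : nat, (1 <= N)%nat /\
     forall n : nat, (N <= n)%nat ->
       Rabs (IZR (A (S n)) * u n + IZR (A n) * u (S n) - PI / 4)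
         <= C / (IZR (cf_den (cf_digit (atan u0 / atan u1)) (n - 1))) ^ 2)
  /\ Un_cv (fun n => IZR (A (S n)) * u n + IZR (A n) * u (S n)) (PI / 4).
Proof.
  intros _ _ _ Hu10 Hpi _ <- <- Hupos Hrec HA0 HA1 HA.
  rewrite <- HA0, <- HA1 in Hpi.
  destruct (arctan_relation_error u A Hupos Hu10 Hrec HA) as [C HC].
  rewrite Hpi in HC.
  split.
  - exists C, 2%nat; split; [lia|].
    intros n Hn; rewrite cf_den_cf_den2.
    replace (S (S (n - 1))) with (S n) by lia.
    now apply HC.
  - apply (Un_cv_of_dist_le_div_sqr _
             (fun n => IZR (cf_den2 (cf_digit (atan (u 0%nat) / atan (u 1%nat))) (S n)))).
    + apply (cv_infty_of_linear_lower _ 2); [lra|].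
      intro n; rewrite INR_IZR_INZ, <- mult_IZR.
      apply IZR_le, cf_den2_linear, (cf_digit_u_ge1 u Hupos Hu10 Hrec).
    + exists C, 2%nat; exact HC.
Qed.
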